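(* Let $Y$ be a set and $1=1_Y$. Then $((1)^{\downarrow})_\ast=(1\cup 1_\Cup)_\ast=\Omega_Y^{\smile}$, and consequently $R^{\downarrow}=R\ast(1_Y)^{\downarrow}$ for every multirelation $R:X\leftrightarrow\mathcal{P}Y$.
   Context: A multirelation $R:X\leftrightarrow\mathcal{P}Y$ is a subset of $X\times\mathcal{P}(Y)$. $1_Y=\{(b,\{b\})\mid b\in Y\}:Y\leftrightarrow\mathcal{P}Y$ and here $1_\Cup=\{(b,\emptyset)\mid b\in Y\}$. $R^{\downarrow}=\{(a,A)\mid\exists B.\ (a,B)\in R\wedge A\subseteq B\}$. $\Omega_Y=\{(A,B)\mid A\subseteq B\subseteq Y\}$ and $\Omega_Y^{\smile}=\{(A,B)\mid B\subseteq A\subseteq Y\}$. The Peleg lifting of $R:X\leftrightarrow\mathcal{P}Y$ is $R_\ast=\{(A,B)\mid\exists f:X\to\mathcal{P}Y.\ (\forall a\in A.\ (a,f(a))\in R)\wedge B=\bigcup_{a\in A}f(a)\}:\mathcal{P}X\leftrightarrow\mathcal{P}Y$. The Peleg composition of $R:X\leftrightarrow\mathcal{P}Y$ and $S:Y\leftrightarrow\mathcal{P}Z$ is $R\ast S=\{(a,C)\mid\exists B.\ (a,B)\in R\wedge (B,C)\in S_\ast\}$. *)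

(* Multirelations, represented with mathcomp-analysis classical sets
   (set T := T -> Prop; equality of sets is Leibniz, justified by the
   propext/funext axioms of boolp). *)
From mathcomp Require Import all_boot.
From mathcomp Require Import boolp classical_sets.
Local Open Scope classical_set_scope.

Definition mrel (X Y : Type) := X -> set Y -> Prop.

Definition mid (Y : Type) : mrel Y Y := fun b B => B = [set b].

Definition mid_cup (Y : Type) : mrel Y Y := fun b B => B = set0.

Definition mrel_union {X Y : Type} (R S : mrel X Y) : mrel X Y :=
  fun a B => R a B \/ S a B.

Definition mdown {X Y : Type} (R : mrel X Y) : mrel X Y :=
  fun a A => exists B, R a B /\ A `<=` B.

Definition Omega_conv (Y : Type) : set Y -> set Y -> Prop :=
  fun A B => B `<=` A.

Definition peleg_lift {X Y : Type} (R : mrel X Y) : set X -> set Y -> Prop :=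
  fun A B => exists f : X -> set Y,
    (forall a, A a -> R a (f a)) /\ B = \bigcup_(a in A) f a.

Definition peleg_comp {X Y Z : Type} (R : mrel X Y) (S : mrel Y Z) : mrel X Z :=
  fun a C => exists B, R a B /\ peleg_lift S B C.

(* A subset of a singleton is the singleton or empty, so 1 u 1_Cup and 1^down
   coincide.  In their lifting every f a lies inside [set a], so the union lies
   inside A; conversely any B <= A is reached with f a = B `&` [set a].  Composing
   with a multirelation whose lifting is Omega_Y^conv then merely shrinks the
   image sets, which is the down-closure. *)
From mathcomp Require Import all_boot.
From mathcomp Require Import boolp classical_sets.
Local Open Scope classical_set_scope.

Lemma mdown_midE (Y : Type) : mdown (mid Y) = fun b B => B `<=` [set b].
Proof.
apply/funext => b; apply/funext => B; apply/propext; split.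
- by move=> [_ [-> sub]].
- by move=> sub; exists [set b].
Qed.

Lemma mid_union_mid_cup (Y : Type) :
  mrel_union (mid Y) (mid_cup Y) = mdown (mid Y).
Proof.
rewrite mdown_midE; apply/funext => b; apply/funext => B; apply/propext; split.
- by move=> [->|->].
- by move=> /subset_set1 [B0|B1]; [right|left].
Qed.

Lemma peleg_lift_mdown_mid (Y : Type) : peleg_lift (mdown (mid Y)) = Omega_conv Y.
Proof.
rewrite mdown_midE; apply/funext => A; apply/funext => B; apply/propext; split.
- by move=> [f [f_sub ->]] b [a Aa /(f_sub a Aa) ->].
- move=> sBA; exists (fun a => B `&` [set a]); split; first by move=> a _ b [].
  by rewrite -setI_bigcupr (bigcup_imset1 _ id) image_id setIidl.
Qed.

Lemma peleg_comp_Omega_conv (X Y : Type) (R : mrel X Y) (S : mrel Y Y) :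
  peleg_lift S = Omega_conv Y -> peleg_comp R S = mdown R.
Proof. by rewrite /peleg_comp => ->. Qed.

Theorem lemma4p6 (Y : Type) :
  peleg_lift (mdown (mid Y)) = peleg_lift (mrel_union (mid Y) (mid_cup Y)) /\
  peleg_lift (mrel_union (mid Y) (mid_cup Y)) = Omega_conv Y /\
  (forall (X : Type) (R : mrel X Y), mdown R = peleg_comp R (mdown (mid Y))).
Proof.
rewrite mid_union_mid_cup peleg_lift_mdown_mid; split => //; split => // X R.
by rewrite peleg_comp_Omega_conv // peleg_lift_mdown_mid.
Qed.
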